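(* Let $X$ be a complete orthomodular lattice. Then the unital involutive quantale $\mathrm{Lin}(X)$ (multiplication = composition, unit = identity map, pointwise joins, involution $s\mapsto s^\star$), equipped with the endomap $[-]\colon\mathrm{Lin}(X)\to\mathrm{Lin}(X)$ given by $[s]=\pi_{s^\star(1)^\perp}$, is a Foulis quantale. In particular $[\mathrm{id}_X]$ is the zero map, and for $s,t\in\mathrm{Lin}(X)$ we have $s\circ t=0$ iff $t=[s]\circ r$ for some $r\in\mathrm{Lin}(X)$.
   Context: An ortholattice is a bounded lattice with an involutive order-reversing map $x\mapsto x^\perp$ with $x\wedge x^\perp=0$; it is orthomodular if $x\le y$ implies $y=x\vee(x^\perp\wedge y)$. Write $x\perp y$ iff $x\le y^\perp$. A map $f\colon X\to X$ on a complete orthomodular lattice is linear if there is $h$ with $f(x)\perp y\iff x\perp h(y)$ for all $x,y$; such $h$ is unique, denoted $f^\star$; $\mathrm{Lin}(X)$ is the set of linear maps $X\to X$. For $a\in X$ the Sasaki projection is $\pi_a(y)=a\wedge(a^\perp\vee y)$. A quantale is a complete lattice with associative multiplication distributing over arbitrary joins on both sides; unital if it has a two-sided unit $e$; involutive if equipped with a join-preserving semigroup involution $*$. A Foulis quantale is a unital involutive quantale $Q$ with an endomap $[-]\colon Q\to Q$ such that: (a) $[s]\cdot[s]=[s]=[s]^*$ for all $s$; (b) $[e]=0$; (c) for all $s,x\in Q$: $s\cdot x=0$ iff there exists $y\in Q$ with $x=[s]\cdot y$. *)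

From Stdlib Require Import ClassicalEpsilon.

Set Implicit Arguments.

Record COML := {
  carrier :> Type;
  le : carrier -> carrier -> Prop;
  sup : (carrier -> Prop) -> carrier;
  orth : carrier -> carrier;
  le_refl : forall x, le x x;
  le_trans : forall x y z, le x y -> le y z -> le x z;
  le_antisym : forall x y, le x y -> le y x -> x = y;
  sup_ub : forall (S : carrier -> Prop) x, S x -> le x (sup S);
  sup_least : forall (S : carrier -> Prop) y,
      (forall x, S x -> le x y) -> le (sup S) y;
  orth_invol : forall x, orth (orth x) = x;
  orth_antitone : forall x y, le x y -> le (orth y) (orth x);
  orth_meet : forall x,
      sup (fun z => le z x /\ le z (orth x)) = sup (fun _ => False);
  orthomodular : forall x y, le x y ->
      y = sup (fun z => z = x \/ z = sup (fun w => le w (orth x) /\ le w y))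
}.

Section Ops.
Variable X : COML.

Definition bot : X := sup X (fun _ => False).
Definition top : X := sup X (fun _ => True).
Definition join (x y : X) : X := sup X (fun z => z = x \/ z = y).
Definition meet (x y : X) : X := sup X (fun z => le X z x /\ le X z y).

Definition orthog (x y : X) : Prop := le X x (orth X y).

Definition is_adjoint (f h : X -> X) : Prop :=
  forall x y, orthog (f x) y <-> orthog x (h y).
Definition is_linear (f : X -> X) : Prop := exists h, is_adjoint f h.

(** f^star: the (unique, when f is linear) adjoint, chosen by epsilon. *)
Definition lstar (f : X -> X) : X -> X :=
  epsilon (inhabits f) (fun h => is_adjoint f h).

Definition sasaki (a : X) (y : X) : X := meet a (join (orth X a) y).

(** Operations on Lin(X) (as functions X -> X; membership via is_linear) *)
Definition fle (f g : X -> X) : Prop := forall x, le X (f x) (g x).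
Definition fsup (S : (X -> X) -> Prop) : X -> X :=
  fun x => sup X (fun z => exists f, S f /\ z = f x).
Definition fcomp (f g : X -> X) : X -> X := fun x => f (g x).
Definition fid : X -> X := fun x => x.

Definition fbracket (s : X -> X) : X -> X := sasaki (orth X (lstar s top)).

End Ops.

(** * Quantale notions, relative to a subset P of a carrier Q
    (Q with its operations restricted to P). *)
Section Quantale.
Variables (Q : Type) (P : Q -> Prop) (qle : Q -> Q -> Prop)
  (qsup : (Q -> Prop) -> Q) (mul : Q -> Q -> Q).

Definition image (f : Q -> Q) (S : Q -> Prop) : Q -> Prop :=
  fun z => exists t, S t /\ z = f t.

Definition is_quantale_on : Prop :=
  (forall x, P x -> qle x x) /\
  (forall x y z, P x -> P y -> P z -> qle x y -> qle y z -> qle x z) /\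
  (forall x y, P x -> P y -> qle x y -> qle y x -> x = y) /\
  (forall S, (forall x, S x -> P x) -> P (qsup S)) /\
  (forall S x, (forall x, S x -> P x) -> S x -> qle x (qsup S)) /\
  (forall S y, (forall x, S x -> P x) -> P y ->
      (forall x, S x -> qle x y) -> qle (qsup S) y) /\
  (forall x y, P x -> P y -> P (mul x y)) /\
  (forall x y z, P x -> P y -> P z -> mul x (mul y z) = mul (mul x y) z) /\
  (forall s S, P s -> (forall x, S x -> P x) ->
      mul s (qsup S) = qsup (image (mul s) S)) /\
  (forall s S, P s -> (forall x, S x -> P x) ->
      mul (qsup S) s = qsup (image (fun t => mul t s) S)).

Variable e : Q.
Definition is_unital_on : Prop :=
  P e /\ (forall x, P x -> mul e x = x /\ mul x e = x).

Variable star : Q -> Q.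
Definition is_involution_on : Prop :=
  (forall x, P x -> P (star x)) /\
  (forall x, P x -> star (star x) = x) /\
  (forall x y, P x -> P y -> star (mul x y) = mul (star y) (star x)) /\
  (forall S, (forall x, S x -> P x) -> star (qsup S) = qsup (image star S)).

Variable br : Q -> Q.
Definition qzero : Q := qsup (fun _ => False).

Definition is_Foulis_quantale_on : Prop :=
  is_quantale_on /\ is_unital_on /\ is_involution_on /\
  (forall s, P s -> P (br s)) /\
  (forall s, P s -> mul (br s) (br s) = br s /\ br s = star (br s)) /\
  br e = qzero /\
  (forall s x, P s -> P x ->
      (mul s x = qzero <-> exists y, P y /\ x = mul (br s) y)).

End Quantale.

(* A map on X is linear exactly when it is the left half of an orthogonality
   Galois connection, so linear maps preserve all joins and Lin(X) inherits
   pointwise joins, composition and adjoints as a unital involutive quantale.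
   Each Sasaki projection pi_a is a self-adjoint idempotent which fixes
   precisely the elements below a.  For linear s, s x = 0 iff x is orthogonal
   to s^star(1), i.e. x <= a with a := s^star(1)^perp; hence s o t = 0 iff
   every value of t lies below a, iff t = pi_a o t, iff t factors through
   [s] = pi_a. *)
From Stdlib Require Import ClassicalEpsilon FunctionalExtensionality.

Arguments orthog {X}. Arguments is_adjoint {X}. Arguments is_linear {X}.
Arguments lstar {X}. Arguments sasaki {X}. Arguments fle {X}. Arguments fsup {X}.
Arguments fcomp {X}. Arguments fid {X}. Arguments fbracket {X}.

Section OrthomodularLattice.
Variable X : COML.
Local Notation "x <= y" := (le X x y).
Local Notation o := (orth X).

Lemma sup_ext (S T : X -> Prop) : (forall z, S z <-> T z) -> sup X S = sup X T.
Proof.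
  intro H. apply le_antisym; apply sup_least; intros; apply sup_ub, H; assumption.
Qed.

Lemma bot_le x : bot X <= x.
Proof. apply sup_least. intros _ []. Qed.

Lemma le_top x : x <= top X.
Proof. apply sup_ub. exact I. Qed.

Lemma orth_swap x y : x <= o y -> y <= o x.
Proof. intro H. apply orth_antitone in H. rewrite orth_invol in H. exact H. Qed.

Lemma join_l x y : x <= join X x y.
Proof. apply sup_ub. auto. Qed.

Lemma join_r x y : y <= join X x y.
Proof. apply sup_ub. auto. Qed.

Lemma join_lub x y z : x <= z -> y <= z -> join X x y <= z.
Proof. intros. apply sup_least. intros w [-> | ->]; assumption. Qed.

Lemma meet_l x y : meet X x y <= x.
Proof. apply sup_least. intros w [H _]. exact H. Qed.

Lemma meet_r x y : meet X x y <= y.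
Proof. apply sup_least. intros w [_ H]. exact H. Qed.

Lemma meet_glb x y z : z <= x -> z <= y -> z <= meet X x y.
Proof. intros. apply sup_ub. auto. Qed.

Lemma demorgan_join x y : o (join X x y) = meet X (o x) (o y).
Proof.
  apply le_antisym.
  - apply meet_glb; apply orth_antitone; [apply join_l | apply join_r].
  - apply orth_swap, join_lub; apply orth_swap; [apply meet_l | apply meet_r].
Qed.

Lemma demorgan_meet x y : o (meet X x y) = join X (o x) (o y).
Proof.
  rewrite <- (orth_invol X (join X (o x) (o y))), demorgan_join, !orth_invol.
  reflexivity.
Qed.

Lemma orthomodular_join {x y} : x <= y -> y = join X x (meet X (o x) y).
Proof. exact (orthomodular X x y). Qed.

Lemma le_orth_self_eq_bot z : z <= o z -> z = bot X.
Proof.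
  intro H. apply le_antisym; [|apply bot_le]. unfold bot.
  rewrite <- (orth_meet X z). apply sup_ub. split; [apply le_refl | exact H].
Qed.

Lemma orth_top : o (top X) = bot X.
Proof. apply le_orth_self_eq_bot. rewrite orth_invol. apply le_top. Qed.

Lemma orthog_top x : orthog x (top X) <-> x = bot X.
Proof.
  unfold orthog. rewrite orth_top. split; intro H.
  - apply le_antisym; [exact H | apply bot_le].
  - rewrite H. apply le_refl.
Qed.

Lemma orthog_sym (x y : X) : orthog x y -> orthog y x.
Proof. apply orth_swap. Qed.

Lemma eq_of_orth_le a b : (forall x, x <= o a <-> x <= o b) -> a = b.
Proof.
  intro H.
  assert (Hab : o b <= o a) by (apply H, le_refl).
  assert (Hba : o a <= o b) by (apply H, le_refl).
  apply orth_antitone in Hab, Hba. rewrite !orth_invol in Hab, Hba.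
  apply le_antisym; assumption.
Qed.

Lemma sasaki_le a x : sasaki a x <= a.
Proof. apply meet_l. Qed.

(* Orthomodularity applied to a^perp <= b^perp, then dualised. *)
Lemma sasaki_id a b : b <= a -> sasaki a b = b.
Proof.
  intro H.
  pose proof (orthomodular_join (orth_antitone X _ _ H)) as E.
  apply (f_equal o) in E. rewrite demorgan_join, demorgan_meet, !orth_invol in E.
  symmetry. exact E.
Qed.

Lemma sasaki_idem (a x : X) : sasaki a (sasaki a x) = sasaki a x.
Proof. apply sasaki_id, sasaki_le. Qed.

Lemma sasaki_galois a x y : sasaki a x <= y <-> x <= join X (o a) (meet X a y).
Proof.
  unfold sasaki. split; intro K.
  - pose proof (orthomodular_join (join_l (o a) x)) as E.
    rewrite orth_invol in E.
    apply le_trans with (join X (o a) x); [apply join_r|]. rewrite E.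
    apply join_lub; [apply join_l|]. eapply le_trans; [|apply join_r].
    apply meet_glb; [apply meet_l | exact K].
  - apply le_trans with (sasaki a (meet X a y)).
    + apply meet_glb; [apply meet_l|]. eapply le_trans; [apply meet_r|].
      apply join_lub; [apply join_l | exact K].
    + rewrite sasaki_id by apply meet_l. apply meet_r.
Qed.

Lemma adjoint_galois {f h : X -> X} :
  is_adjoint f h -> forall x y, f x <= y <-> x <= o (h (o y)).
Proof.
  intros H x y. pose proof (H x (o y)) as K. unfold orthog in K.
  rewrite orth_invol in K. exact K.
Qed.

Lemma adjoint_monotone {f h : X -> X} :
  is_adjoint f h -> forall x y, x <= y -> f x <= f y.
Proof.
  intros H x y Hxy. apply (adjoint_galois H).
  apply le_trans with y; [exact Hxy|]. apply (adjoint_galois H), le_refl.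
Qed.

Lemma adjoint_sup {f h : X -> X} :
  is_adjoint f h -> forall S, f (sup X S) = sup X (fun z => exists x, S x /\ z = f x).
Proof.
  intros H S. apply le_antisym.
  - apply (adjoint_galois H), sup_least. intros x Sx.
    apply (adjoint_galois H), sup_ub. eauto.
  - apply sup_least. intros z [x [Sx ->]].
    apply (adjoint_monotone H), sup_ub, Sx.
Qed.

Lemma adjoint_zero {f h : X -> X} :
  is_adjoint f h -> forall x, f x = bot X <-> x <= o (h (top X)).
Proof. intros H x. rewrite <- orthog_top. apply H. Qed.

Lemma adjoint_sym {f h : X -> X} : is_adjoint f h -> is_adjoint h f.
Proof. intros H x y. split; intro K; apply orthog_sym, H, orthog_sym, K. Qed.

Lemma adjoint_unique {f h h' : X -> X} : is_adjoint f h -> is_adjoint f h' -> h = h'.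
Proof.
  intros H H'. apply functional_extensionality. intro y.
  apply eq_of_orth_le. intro x. rewrite <- (H x y). apply H'.
Qed.

Lemma lstar_adjoint {f : X -> X} : is_linear f -> is_adjoint f (lstar f).
Proof. intro H. unfold lstar. apply epsilon_spec. exact H. Qed.

Lemma lstar_eq {f h : X -> X} : is_adjoint f h -> lstar f = h.
Proof. intro H. apply (adjoint_unique (lstar_adjoint (ex_intro _ h H)) H). Qed.

Lemma lstar_linear (f : X -> X) : is_linear f -> is_linear (lstar f).
Proof. intro H. exists f. apply adjoint_sym, lstar_adjoint, H. Qed.

Lemma fid_adjoint : is_adjoint fid (@fid X).
Proof. intros x y. reflexivity. Qed.

Lemma fcomp_adjoint {f g hf hg : X -> X} :
  is_adjoint f hf -> is_adjoint g hg -> is_adjoint (fcomp f g) (fcomp hg hf).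
Proof. intros Hf Hg x y. unfold fcomp. etransitivity; [apply Hf | apply Hg]. Qed.

Lemma fsup_adjoint (S : (X -> X) -> Prop) : (forall f, S f -> is_linear f) ->
  is_adjoint (fsup S) (fsup (image lstar S)).
Proof.
  intros HS x y. unfold orthog, fsup. split; intro K.
  - apply orth_swap, sup_least. intros z [f [[t [St ->]] ->]].
    apply orth_swap, (lstar_adjoint (HS t St)). unfold orthog.
    eapply le_trans; [|exact K]. apply sup_ub. eauto.
  - apply sup_least. intros z [f [Sf ->]].
    apply (lstar_adjoint (HS f Sf)), orth_swap.
    eapply le_trans; [|apply orth_swap, K].
    apply sup_ub. exists (lstar f). split; [exists f; auto | reflexivity].
Qed.

Lemma sasaki_adjoint (a : X) : is_adjoint (sasaki a) (sasaki a).
Proof.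
  intros x y. unfold orthog. rewrite sasaki_galois. unfold sasaki.
  rewrite demorgan_meet, demorgan_join, orth_invol. reflexivity.
Qed.

Lemma qzero_fsup : qzero (@fsup X) = fun _ => bot X.
Proof.
  apply functional_extensionality. intro z.
  apply le_antisym; [|apply bot_le]. apply sup_least. intros w [f [[] _]].
Qed.

Lemma fcomp_fsup_l (s : X -> X) (S : (X -> X) -> Prop) : is_linear s ->
  fcomp s (fsup S) = fsup (image (fcomp s) S).
Proof.
  intro Hs. apply functional_extensionality. intro x. unfold fcomp, fsup.
  rewrite (adjoint_sup (lstar_adjoint Hs)). apply sup_ext. intro z. split.
  - intros [w [[f [Sf ->]] ->]]. exists (fcomp s f). split; [exists f; auto | reflexivity].
  - intros [f [[t [St ->]] ->]]. exists (t x). split; [exists t; auto | reflexivity].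
Qed.

Lemma fcomp_fsup_r (s : X -> X) (S : (X -> X) -> Prop) :
  fcomp (fsup S) s = fsup (image (fun t => fcomp t s) S).
Proof.
  apply functional_extensionality. intro x. unfold fcomp, fsup.
  apply sup_ext. intro z. split.
  - intros [f [Sf ->]]. exists (fcomp f s). split; [exists f; auto | reflexivity].
  - intros [f [[t [St ->]] ->]]. exists t. split; [exact St | reflexivity].
Qed.

Lemma Lin_quantale : is_quantale_on is_linear fle (@fsup X) fcomp.
Proof.
  repeat split.
  - intros f _ x. apply le_refl.
  - intros f g h _ _ _ Hfg Hgh x. eapply le_trans; [apply Hfg | apply Hgh].
  - intros f g _ _ Hfg Hgf. apply functional_extensionality. intro x.
    apply le_antisym; auto.
  - intros S HS. eexists. apply fsup_adjoint, HS.
  - intros S f _ Sf x. apply sup_ub. eauto.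
  - intros S g _ _ H x. apply sup_least. intros z [f [Sf ->]]. apply H, Sf.
  - intros f g [hf Hf] [hg Hg]. exists (fcomp hg hf). apply fcomp_adjoint; assumption.
  - intros s S Hs _. apply fcomp_fsup_l, Hs.
  - intros s S _ _. apply fcomp_fsup_r.
Qed.

Lemma Lin_unital : is_unital_on is_linear fcomp (@fid X).
Proof.
  split.
  - exists fid. apply fid_adjoint.
  - intros f _. split; reflexivity.
Qed.

Lemma Lin_involution : is_involution_on is_linear (@fsup X) fcomp lstar.
Proof.
  repeat split.
  - apply lstar_linear.
  - intros f Hf. apply lstar_eq, adjoint_sym, lstar_adjoint, Hf.
  - intros f g Hf Hg. apply lstar_eq, fcomp_adjoint; apply lstar_adjoint; assumption.
  - intros S HS. apply lstar_eq, fsup_adjoint, HS.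
Qed.

Lemma fbracket_linear (s : X -> X) : is_linear (fbracket s).
Proof. eexists. apply sasaki_adjoint. Qed.

Lemma fbracket_projection (s : X -> X) :
  fcomp (fbracket s) (fbracket s) = fbracket s /\ fbracket s = lstar (fbracket s).
Proof.
  split.
  - apply functional_extensionality. intro x. apply sasaki_idem.
  - symmetry. apply lstar_eq, sasaki_adjoint.
Qed.

Lemma fbracket_fid : fbracket fid = qzero (@fsup X).
Proof.
  rewrite qzero_fsup. apply functional_extensionality. intro x.
  unfold fbracket. rewrite (lstar_eq fid_adjoint). unfold fid. rewrite orth_top.
  apply le_antisym; [apply sasaki_le | apply bot_le].
Qed.

Lemma fcomp_eq_qzero (s t : X -> X) : is_linear s ->
  fcomp s t = qzero (@fsup X) <-> forall x, t x <= o (lstar s (top X)).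
Proof.
  intro Hs. rewrite qzero_fsup. split.
  - intros H x. apply (adjoint_zero (lstar_adjoint Hs)).
    exact (f_equal (fun F => F x) H).
  - intro H. apply functional_extensionality. intro x.
    apply (adjoint_zero (lstar_adjoint Hs)), H.
Qed.

Lemma fcomp_eq_qzero_factor (s t : X -> X) : is_linear s -> is_linear t ->
  fcomp s t = qzero (@fsup X) <-> exists r, is_linear r /\ t = fcomp (fbracket s) r.
Proof.
  intros Hs Ht. rewrite (fcomp_eq_qzero s t Hs). split.
  - intro H. exists t. split; [exact Ht|].
    apply functional_extensionality. intro x. symmetry. apply sasaki_id, H.
  - intros [r [_ ->]] x. apply sasaki_le.
Qed.

End OrthomodularLattice.

Theorem mainTheorem4 (X : COML) :
  is_Foulis_quantale_on (@is_linear X) (@fle X) (@fsup X) (@fcomp X)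
    (@fid X) (@lstar X) (@fbracket X).
Proof.
  split; [exact (Lin_quantale X)|].
  split; [exact (Lin_unital X)|].
  split; [exact (Lin_involution X)|].
  split; [intros s _; apply fbracket_linear|].
  split; [intros s _; apply fbracket_projection|].
  split; [exact (fbracket_fid X)|].
  exact (@fcomp_eq_qzero_factor X).
Qed.
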